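(* Let $n,m\geq1$. Let $p_{ij}\in\mathbb{R}$ ($i=1,\ldots,n$, $j=1,\ldots,m$), $w_{j}>0$, $d_{j}>0$, $h_{j}\in\mathbb{R}$ ($j=1,\ldots,m$), $b_{ik}\in\mathbb{R}\cup\{-\infty\}$ ($i,k=1,\ldots,n$), nonzero reals $c_{1},\ldots,c_{n}$, and reals $f_{i}\leq g_{i}$ ($i=1,\ldots,n$). Consider the problem of minimizing over $\bm{x}=(x_{1},\ldots,x_{n})^{T}\in\mathbb{R}^{n}$ $$\max_{1\leq j\leq m}\Big(w_{j}\max_{1\leq i\leq n}|x_{i}-p_{ij}|+h_{j}\Big)$$ subject to $\max_{1\leq i\leq n}|x_{i}-p_{ij}|\leq d_{j}$ ($j=1,\ldots,m$), $b_{ik}+c_{k}x_{k}\leq c_{i}x_{i}$ ($i,k=1,\ldots,n$), and $f_{i}\leq x_{i}\leq g_{i}$ ($i=1,\ldots,n$). Suppose that 1. $\max_{1\leq i_{1},\ldots,i_{k-1}\leq n,\ i_{0}=i_{k}=i}(b_{i_{0}i_{1}}+\cdots+b_{i_{k-1}i_{k}})\leq0$ for all $i,k=1,\ldots,n$; 2. $b_{ik}^{\ast}+\max\{\max_{1\leq l\leq m}(c_{k}p_{kl}-|c_{k}|d_{l}),\min\{c_{k}f_{k},c_{k}g_{k}\}\}\leq\min\{\min_{1\leq j\leq m}(c_{i}p_{ij}+|c_{i}|d_{j}),\max\{c_{i}f_{i},c_{i}g_{i}\}\}$ for all $i,k=1,\ldots,n$. Then the minimum value of the problem is $$\theta=\max_{1\leq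 i,k\leq n}\max_{1\leq j,l\leq m}\max\Bigg\{\frac{|c_{i}|w_{l}h_{j}+|c_{k}|w_{j}h_{l}}{|c_{i}|w_{l}+|c_{k}|w_{j}}+\frac{w_{j}w_{l}}{|c_{k}|w_{j}+|c_{i}|w_{l}}(b_{ik}^{\ast}-c_{i}p_{ij}+c_{k}p_{kl}),$$ $$h_{j}+\frac{w_{j}}{|c_{i}|}\big(b_{ik}^{\ast}-c_{i}p_{ij}+\max\{c_{k}p_{kl}-|c_{k}|d_{l},\min\{c_{k}f_{k},c_{k}g_{k}\}\}\big),$$ $$h_{l}+\frac{w_{l}}{|c_{k}|}\big(b_{ik}^{\ast}-\min\{c_{i}p_{ij}+|c_{i}|d_{j},\max\{c_{i}f_{i},c_{i}g_{i}\}\}+c_{k}p_{kl}\big)\Bigg\},$$ and all solution vectors $\bm{x}=(x_{i})$ have entries $x_{i}=y_{i}/c_{i}$, where $y_{i}=\max_{1\leq k\leq n}(b_{ik}^{\ast}+v_{k})$, $i=1,\ldots,n$, and the parameter vector $\bm{v}=(v_{k})$ satisfies, for each $k=1,\ldots,n$, $$\max_{1\leq j\leq m}\max\left\{\frac{|c_{k}|(h_{j}-\theta)}{w_{j}}+c_{k}p_{kj},\ c_{k}p_{kj}-|c_{k}|d_{j},\ \min\{c_{k}f_{k},c_{k}g_{k}\}\right\}\leq v_{k}$$ $$\leq\min_{1\leq i\leq n}\left(\min_{1\leq j\leq m}\min\left\{\frac{|c_{i}|(\theta-h_{j})}{w_{j}}+c_{i}p_{ij},\ c_{i}p_{ij}+|c_{i}|d_{j},\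 \max\{c_{i}f_{i},c_{i}g_{i}\}\right\}-b_{ik}^{\ast}\right).$$
   Context: Conventions: $-\infty+a=-\infty$ for any $a$, and $a-(-\infty)=+\infty$ for real $a$. For $i,k=1,\ldots,n$ define $$\beta_{ik}=\max_{1\leq l\leq n-1}\ \max_{1\leq i_{1},\ldots,i_{l-1}\leq n,\ i_{0}=i,\ i_{l}=k}(b_{i_{0}i_{1}}+\cdots+b_{i_{l-1}i_{l}})$$ (an empty maximum is $-\infty$), and set $b_{ik}^{\ast}=\beta_{ik}$ if $i\neq k$ and $b_{ii}^{\ast}=\max\{\beta_{ii},0\}$. *)

From HB Require Import structures.
From mathcomp Require Import all_boot all_order all_algebra.
From mathcomp Require Import reals constructive_ereal.
Set Implicit Arguments. Unset Strict Implicit. Unset Printing Implicit Defensive.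
Import Order.TTheory GRing.Theory Num.Theory.
Local Open Scope ring_scope.
Local Open Scope ereal_scope.

Section Defs.
Variable R : realType.
Variable n : nat.

(* weight b_{i i1} + b_{i1 i2} + ... + b_{il k} of the path i -> s -> k
   (s = list of intermediate vertices); -oo + a = -oo (ereal addition) *)
Fixpoint pathw (b : 'I_n -> 'I_n -> \bar R) (i : 'I_n) (s : seq 'I_n)
  (k : 'I_n) : \bar R :=
  match s with
  | [::] => b i k
  | j :: s' => b i j + pathw b j s' k
  end.

(* beta_{ik}: max over paths of length l = 1..n-1 (l-1 intermediate
   vertices, l-1 = 0..n-2); empty max = -oo *)
Definition beta (b : 'I_n -> 'I_n -> \bar R) (i k : 'I_n) : \bar R :=
  \big[Order.max/-oo]_(l < n.-1)
     \big[Order.max/-oo]_(t : l.-tuple 'I_n) pathw b i t k.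

Definition bstar (b : 'I_n -> 'I_n -> \bar R) (i k : 'I_n) : \bar R :=
  if i == k then Order.max (beta b i i) 0 else beta b i k.
End Defs.

Section Problem.
Variables (R : realType) (n m : nat).
Variables (p : 'I_n -> 'I_m -> R) (w d h : 'I_m -> R)
  (b : 'I_n -> 'I_n -> \bar R) (c f g : 'I_n -> R).

(* max_i |x_i - p_ij|  (n >= 1, values nonnegative, so idx 0 is harmless) *)
Definition chebdist (x : 'I_n -> R) (j : 'I_m) : R :=
  (\big[Order.max/0%R]_(i < n) `|x i - p i j|)%R.

Definition objective (x : 'I_n -> R) : \bar R :=
  \big[Order.max/-oo]_(j < m) ((w j * chebdist x j + h j)%R)%:E.

Definition feasible (x : 'I_n -> R) : Prop :=
  [/\ forall j, (chebdist x j <= d j)%R,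
      forall i k, b i k + (c k * x k)%:E <= (c i * x i)%:E
    & forall i, (f i <= x i <= g i)%R].

Definition lowk (k : 'I_n) : \bar R :=
  Order.max (\big[Order.max/-oo]_(l < m) ((c k * p k l - `|c k| * d l)%R)%:E)
            ((Order.min (c k * f k) (c k * g k))%R)%:E.

Definition uppi (i : 'I_n) : \bar R :=
  Order.min (\big[Order.min/+oo]_(j < m) ((c i * p i j + `|c i| * d j)%R)%:E)
            ((Order.max (c i * f i) (c i * g i))%R)%:E.

Definition theta_term1 (i k : 'I_n) (j l : 'I_m) : \bar R :=
  ((`|c i| * w l * h j + `|c k| * w j * h l)
      / (`|c i| * w l + `|c k| * w j))%R%:E
  + ((w j * w l / (`|c k| * w j + `|c i| * w l))%R)%:E
    * (bstar b i k - (c i * p i j)%:E + (c k * p k l)%:E).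

Definition theta_term2 (i k : 'I_n) (j l : 'I_m) : \bar R :=
  (h j)%:E + ((w j / `|c i|)%R)%:E
    * (bstar b i k - (c i * p i j)%:E + lowk k).

Definition theta_term3 (i k : 'I_n) (j l : 'I_m) : \bar R :=
  (h l)%:E + ((w l / `|c k|)%R)%:E
    * (bstar b i k - uppi i + (c k * p k l)%:E).

Definition theta : \bar R :=
  \big[Order.max/-oo]_(i < n) \big[Order.max/-oo]_(k < n)
  \big[Order.max/-oo]_(j < m) \big[Order.max/-oo]_(l < m)
  Order.max (Order.max (theta_term1 i k j l) (theta_term2 i k j l))
            (theta_term3 i k j l).

Definition vlow (th : \bar R) (k : 'I_n) : \bar R :=
  \big[Order.max/-oo]_(j < m)
    Order.max (Order.max
      (((`|c k| / w j)%R)%:E * ((h j)%:E - th) + (c k * p k j)%:E)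
      ((c k * p k j - `|c k| * d j)%R)%:E)
      ((Order.min (c k * f k) (c k * g k))%R)%:E.

(* upper bound on v_k; a - (-oo) = +oo *)
Definition vupp (th : \bar R) (k : 'I_n) : \bar R :=
  \big[Order.min/+oo]_(i < n)
    ((\big[Order.min/+oo]_(j < m)
       Order.min (Order.min
         (((`|c i| / w j)%R)%:E * (th - (h j)%:E) + (c i * p i j)%:E)
         ((c i * p i j + `|c i| * d j)%R)%:E)
         ((Order.max (c i * f i) (c i * g i))%R)%:E)
     - bstar b i k).

Definition yvec (v : 'I_n -> R) (i : 'I_n) : \bar R :=
  \big[Order.max/-oo]_(k < n) (bstar b i k + (v k)%:E).
End Problem.

From HB Require Import structures.
From mathcomp Require Import all_boot all_order all_algebra.
From mathcomp Require Import reals constructive_ereal.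
From mathcomp Require Import ring lra zify.
Set Implicit Arguments. Unset Strict Implicit. Unset Printing Implicit Defensive.
Import Order.TTheory GRing.Theory Num.Theory.
Local Open Scope ring_scope.
Local Open Scope ereal_scope.

(* Put y_i = c_i x_i.  The constraints together with "objective <= t" become
   the tropical subsolution inequalities  b_ik + y_k <= y_i  plus box bounds
   vlow_t(k) <= y_k <= yupp_t(i).  When b has no positive cycle, the
   subsolutions are exactly the vectors  y = b* (x) v,  and such a y lies in
   the box iff  vlow_t(k) <= v_k <= min_i (yupp_t(i) - b*_ik); so the box is
   nonempty iff  b*_ik + vlow_t(k) <= yupp_t(i)  for all i, k.  Splitting each
   bound into its objective part and its static part (lowk, uppi), this
   condition reads term by term as  theta <= t,  the static/static part being
   condition 2.  Hence theta is the least admissible level, attained exactly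
   at the vectors y = b* (x) v above. *)

Section ExtendedReals.
Variable R : realType.

Lemma adde_bigmaxr (I : Type) (r : seq I) (P : pred I) (x : \bar R) (F : I -> \bar R) :
  x + \big[Order.max/-oo]_(i <- r | P i) F i
  = \big[Order.max/-oo]_(i <- r | P i) (x + F i).
Proof. exact: (big_morph _ (adde_maxr x) (addeNy x)). Qed.

Lemma adde_bigmaxl (I : Type) (r : seq I) (P : pred I) (x : \bar R) (F : I -> \bar R) :
  \big[Order.max/-oo]_(i <- r | P i) F i + x
  = \big[Order.max/-oo]_(i <- r | P i) (F i + x).
Proof. exact: (big_morph (+%E^~ x) (fun y z => adde_maxl y z x) (addNye x)). Qed.

Lemma bigmax_fin_num (I : finType) (i0 : I) (F : I -> \bar R) :
  (forall i, F i \is a fin_num) -> \big[Order.max/-oo]_i F i \is a fin_num.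
Proof.
move=> F_fin; have F_lt i : -oo < F i < +oo by rewrite -fin_numElt.
rewrite fin_numElt (lt_le_trans _ (le_bigmax _ F i0)) ?(andP (F_lt i0)).1 //=.
by apply/bigmax_ltP; split => [//|i _]; case/andP: (F_lt i).
Qed.

Lemma bigmin_fin_num (I : finType) (i0 : I) (F : I -> \bar R) :
  (forall i, F i \is a fin_num) -> \big[Order.min/+oo]_i F i \is a fin_num.
Proof.
move=> F_fin; have F_lt i : -oo < F i < +oo by rewrite -fin_numElt.
rewrite fin_numElt (le_lt_trans (bigmin_le _ i0 F)) ?(andP (F_lt i0)).2 ?andbT //.
by apply/bigmin_gtP; split => [//|i _]; case/andP: (F_lt i).
Qed.

Lemma EFin_leeBrDl (u z : \bar R) (y : R) : z < +oo -> -oo < u ->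
  (y%:E <= u - z) = (z + y%:E <= u).
Proof.
case: z => [r| |] // _ u_gt; first by rewrite leeBrDl.
by rewrite addNye leNye addey ?leey // -ltNye.
Qed.

Lemma EFin_add_mulNy (r a : R) (y z : \bar R) : (0 < a)%R ->
  r%:E + a%:E * (-oo + y + z) = -oo.
Proof. by move=> a_gt0; rewrite !addNye gt0_muleNy ?lte_fin // addeNy. Qed.

Lemma EFin_eq_mul_inv (y : \bar R) (a z : R) : (a != 0)%R ->
  z%:E = y * (a^-1)%:E <-> y = (a * z)%:E.
Proof.
move=> a_neq0; split=> [zE|->]; last by rewrite -EFinM (mulrC a) mulfK.
by rewrite -[y]mule1 -(mulVf a_neq0) EFinM muleA -zE -EFinM mulrC.
Qed.

End ExtendedReals.

Section RealScaling.
Variable R : realType.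
Local Open Scope ring_scope.

Lemma ler_dist_scale (c x q e : R) : c != 0 ->
  (`|x - q| <= e) = (c * q - `|c| * e <= c * x <= c * q + `|c| * e).
Proof. by move=> c0; rewrite -ler_distl -mulrBr normrM ler_pM2l ?normr_gt0. Qed.

Lemma ler_itv_scale (c x f g : R) : c != 0 -> f <= g ->
  (f <= x <= g)
  = (Order.min (c * f) (c * g) <= c * x <= Order.max (c * f) (c * g)).
Proof.
move=> c0 le_fg; have [c_lt0|c_gt0|] := ltgtP c 0; last by move/eqP: c0.
- by rewrite min_r ?max_l ?ler_nM2l // andbC.
- by rewrite min_l ?max_r ?ler_pM2l.
Qed.

Lemma ler_scaled_diff (x y z t k : R) : 0 < k -> y - x = k * (t - z) ->
  (x <= y) = (z <= t).
Proof. by move=> k_gt0 E; rewrite -subr_ge0 E pmulr_rge0 // subr_ge0. Qed.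

Lemma ler_affine (s u a X t : R) : 0 < a -> 0 < u ->
  (s + u / a * X <= t) = (X <= a / u * (t - s)).
Proof.
move=> a_gt0 u_gt0; apply: (@ler_scaled_diff _ _ _ _ (u / a)); first by rewrite divr_gt0.
by field; rewrite !gt_eqF.
Qed.

(* The expression compared with [t] on the left is the level at which the
   increasing bound [a / u * (t - s) + P] meets the decreasing bound
   [B + (e / v * (s' - t) + Q)]. *)
Lemma ler_mediant (a e u v s s' B P Q t : R) :
  0 < a -> 0 < e -> 0 < u -> 0 < v ->
  ((a * v * s + e * u * s') / (a * v + e * u)
     + u * v / (e * u + a * v) * (B - P + Q) <= t)
  = (B + (e / v * (s' - t) + Q) <= a / u * (t - s) + P).
Proof.
move=> a_gt0 e_gt0 u_gt0 v_gt0.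
have D_gt0 : 0 < a * v + e * u by rewrite addr_gt0 ?mulr_gt0.
symmetry; apply: (@ler_scaled_diff _ _ _ _ ((a * v + e * u) / (u * v))).
  by rewrite divr_gt0 ?mulr_gt0.
by rewrite [e * u + _]addrC; field; rewrite !gt_eqF.
Qed.

End RealScaling.

Lemma not_uniq_split (T : eqType) (s : seq T) : ~~ uniq s ->
  exists x s1 s2 s3, s = s1 ++ x :: s2 ++ x :: s3.
Proof.
elim: s => [//|a s IH] /=; rewrite negb_and negbK => /orP[/splitPr[s2 s3]|].
  by exists a, [::], s2, s3.
by case/IH => x [s1 [s2 [s3 ->]]]; exists x, (a :: s1), s2, s3.
Qed.

Lemma mem_split_cat (T : eqType) (x : T) (s : seq T) : x \in s ->
  exists s1 s2, s = s1 ++ x :: s2.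
Proof. by case/splitPr => s1 s2; exists s1, s2. Qed.

Section KleeneStar.
Variables (R : realType) (n : nat) (b : 'I_n -> 'I_n -> \bar R).

Lemma pathw_cat i s1 x s2 k :
  pathw b i (s1 ++ x :: s2) k = pathw b i s1 x + pathw b x s2 k.
Proof. by elim: s1 i => [|a s1 IH] i //=; rewrite IH addeA. Qed.

Lemma bstar_ge0 i : 0 <= bstar b i i.
Proof. by rewrite /bstar eqxx le_max lexx orbT. Qed.

Lemma pathw_le_beta i s k : (size s < n.-1)%N -> pathw b i s k <= beta b i k.
Proof.
move=> lt_s; apply: le_trans (le_bigmax _ _ (Ordinal lt_s)).
exact: (le_bigmax _ (fun t : (size s).-tuple 'I_n => pathw b i t k) (in_tuple s)).
Qed.

Definition subsolution (y : 'I_n -> R) :=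
  forall i k, b i k + (y k)%:E <= (y i)%:E.

Lemma pathw_subsolution y : subsolution y ->
  forall s i k, pathw b i s k + (y k)%:E <= (y i)%:E.
Proof.
move=> suby; elim=> [|a s IH] i k //=.
by rewrite -addeA; apply: le_trans (suby i a); apply: leeD2l.
Qed.

Lemma bstar_subsolution y : subsolution y ->
  forall i k, bstar b i k + (y k)%:E <= (y i)%:E.
Proof.
move=> suby i k.
have beta_le l : beta b i l + (y l)%:E <= (y i)%:E.
  rewrite /beta adde_bigmaxl; apply/bigmax_leP; split=> [|t _]; first exact: leNye.
  rewrite adde_bigmaxl; apply/bigmax_leP; split=> [|s _]; first exact: leNye.
  exact: pathw_subsolution.
rewrite /bstar; case: eqP => [<-|_] //.
by rewrite adde_maxl ge_max beta_le add0e lexx.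
Qed.

Lemma le_yvec v k : (v k)%:E <= yvec b v k.
Proof.
apply: le_trans (le_bigmax _ (fun l => bstar b k l + (v l)%:E) k).
by rewrite leeDr ?bstar_ge0.
Qed.

Hypothesis cycle_le0 : forall i (l : 'I_n) (t : l.-tuple 'I_n), pathw b i t i <= 0.

Lemma cycle_le0_seq i s : (size s < n)%N -> pathw b i s i <= 0.
Proof. by move=> lt_s; exact: (@cycle_le0 i (Ordinal lt_s) (in_tuple s)). Qed.

Lemma uniq_size_ord (s : seq 'I_n) : uniq s -> (size s <= n)%N.
Proof.
move=> uniq_s; rewrite -[n in (_ <= n)%N]size_enum_ord.
by apply: uniq_leq_size => // x; rewrite mem_enum.
Qed.

Lemma simple_pathw_le_bstar i s k : uniq (i :: s) -> k \notin s ->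
  pathw b i s k <= bstar b i k.
Proof.
move=> uniq_is k_s; case: (eqVneq i k) => [<-|neq_ik].
  by rewrite /bstar eqxx le_max cycle_le0_seq ?orbT //; exact: uniq_size_ord uniq_is.
rewrite /bstar (negPf neq_ik); apply: pathw_le_beta; rewrite ltn_predRL.
apply: (@uniq_size_ord (i :: k :: s)).
by move: uniq_is; rewrite /= !inE negb_or neq_ik k_s => /andP[-> ->].
Qed.

(* Cut out a closed subwalk, whose weight is nonpositive. *)
Lemma pathw_shorten i s k : (size s < n)%N -> ~~ uniq (i :: s) || (k \in s) ->
  exists2 s', (size s' < size s)%N & pathw b i s k <= pathw b i s' k.
Proof.
move=> lt_s; rewrite /= negb_and negbK -orbA => /or3P[|/not_uniq_split|].
- case/mem_split_cat=> s1 [s2 E]; subst s; rewrite size_cat /= in lt_s *.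
  exists s2; first lia.
  rewrite pathw_cat; apply: le_trans (leeD2r _ (@cycle_le0_seq i s1 _)) _; first lia.
  by rewrite add0e.
- case=> x [s1 [s2 [s3 E]]]; subst s; rewrite !size_cat /= size_cat /= in lt_s *.
  exists (s1 ++ x :: s3); first by rewrite size_cat /=; lia.
  rewrite !pathw_cat addeA.
  apply: le_trans (leeD2r _ (leeD2l _ (@cycle_le0_seq x s2 _))) _; first lia.
  by rewrite adde0.
- case/mem_split_cat=> s1 [s2 E]; subst s; rewrite size_cat /= in lt_s *.
  exists s1; first lia.
  rewrite pathw_cat; apply: le_trans (leeD2l _ (@cycle_le0_seq k s2 _)) _; first lia.
  by rewrite adde0.
Qed.

Lemma pathw_le_bstar i s k : (size s < n)%N -> pathw b i s k <= bstar b i k.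
Proof.
have [N] := ubnP (size s); elim: N => // N IH in s *; rewrite ltnS => le_sN lt_sn.
have [/andP[uniq_is k_s]|] := boolP (uniq (i :: s) && (k \notin s)).
  exact: simple_pathw_le_bstar.
rewrite negb_and negbK => /(pathw_shorten lt_sn)[s' lt_s' le_ss'].
apply: le_trans le_ss' (IH s' _ _); first exact: leq_trans lt_s' le_sN.
exact: ltn_trans lt_s' lt_sn.
Qed.

Lemma b_bstar_le i k l : b i k + bstar b k l <= bstar b i l.
Proof.
have beta_le l' : b i k + beta b k l' <= bstar b i l'.
  rewrite /beta adde_bigmaxr; apply/bigmax_leP; split=> [|t _]; first exact: leNye.
  rewrite adde_bigmaxr; apply/bigmax_leP; split=> [|s _]; first exact: leNye.
  by apply: (@pathw_le_bstar i (k :: s)); rewrite /= -ltn_predRL size_tuple.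
rewrite {1}/bstar; case: eqP => [<-|_] //.
rewrite adde_maxr ge_max beta_le adde0 /=.
by apply: (@pathw_le_bstar i [::]); rewrite (leq_ltn_trans _ (ltn_ord i)).
Qed.

Lemma yvec_subsolution v i k : b i k + yvec b v k <= yvec b v i.
Proof.
rewrite /yvec adde_bigmaxr; apply/bigmax_leP; split=> [|l _]; first exact: leNye.
apply: le_trans (le_bigmax _ (fun l => bstar b i l + (v l)%:E) l).
by rewrite addeA leeD2r // b_bstar_le.
Qed.

Lemma yvec_id y : subsolution y -> forall i, yvec b y i = (y i)%:E.
Proof.
move=> suby i; apply/le_anti; rewrite le_yvec andbT.
by apply/bigmax_leP; split=> [|k _]; [exact: leNye | exact: bstar_subsolution].
Qed.

Variables lo up : 'I_n -> \bar R.
Hypothesis bstar_lt : forall i k, bstar b i k < +oo.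
Hypothesis up_gt : forall i, -oo < up i.

Definition in_box (y : 'I_n -> R) :=
  subsolution y /\ forall k, lo k <= (y k)%:E <= up k.

Lemma in_box_bstar_le y : in_box y -> forall i k, bstar b i k + lo k <= up i.
Proof.
move=> [suby box_y] i k; have /andP[lo_y _] := box_y k; have /andP[_ y_up] := box_y i.
apply: le_trans (leeD2l _ lo_y) _.
exact: le_trans (bstar_subsolution suby i k) y_up.
Qed.

Lemma in_boxP y : in_box y <->
  exists v, (forall k, lo k <= (v k)%:E <= \big[Order.min/+oo]_i (up i - bstar b i k))
            /\ forall i, yvec b v i = (y i)%:E.
Proof.
split=> [[suby box_y]|[v [box_v yE]]].
  exists y; split=> [k|]; last exact: yvec_id.
  have /andP[-> _] := box_y k; apply/bigmin_geP; split=> [|i _]; first exact: leey.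
  rewrite EFin_leeBrDl //; apply: le_trans (bstar_subsolution suby i k) _.
  by case/andP: (box_y i).
split=> [i k|k]; first by have := yvec_subsolution v i k; rewrite !yE.
rewrite -yE; have /andP[lo_v _] := box_v k; rewrite (le_trans lo_v (le_yvec v k)).
apply/bigmax_leP; split=> [|l _]; first exact: leNye.
have /andP[_ /bigmin_geP[_ /(_ k isT)]] := box_v l.
by rewrite EFin_leeBrDl.
Qed.

Lemma in_box_exists : (forall k, lo k \is a fin_num) ->
  (forall i k, bstar b i k + lo k <= up i) -> exists y, in_box y.
Proof.
move=> lo_fin lo_up; pose v k := fine (lo k).
have vE k : (v k)%:E = lo k by rewrite fineK.
have yvec_fin i : yvec b v i \is a fin_num.
  rewrite fin_numElt (lt_le_trans (ltNyr _) (le_yvec v i)) /=.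
  by apply/bigmax_ltP; split=> [//|k _]; rewrite lte_add_pinfty ?ltry.
exists (fun i => fine (yvec b v i)); apply/in_boxP; exists v.
split=> [k|i]; last by rewrite fineK.
rewrite vE lexx; apply/bigmin_geP; split=> [|i _]; first exact: leey.
by rewrite -vE EFin_leeBrDl // vE.
Qed.

End KleeneStar.

Section Problem.
Variables (R : realType) (n m : nat).
Variables (p : 'I_n -> 'I_m -> R) (w d h : 'I_m -> R)
  (b : 'I_n -> 'I_n -> \bar R) (c f g : 'I_n -> R).
Hypotheses (n_gt0 : (0 < n)%N) (m_gt0 : (0 < m)%N).
Hypothesis w_gt0 : forall j, (0 < w j)%R.
Hypothesis c_neq0 : forall i, c i != 0%R.
Hypothesis le_fg : forall i, (f i <= g i)%R.
Hypothesis cycle_le0 :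
  forall i (l : 'I_n) (t : l.-tuple 'I_n), pathw b i t i <= 0.
Hypothesis cond2 :
  forall i k, bstar b i k + lowk p d c f g k <= uppi p d c f g i.

Local Notation feasible := (feasible p d b c f g).
Local Notation objective := (objective p w h).
Local Notation lowk := (lowk p d c f g).
Local Notation uppi := (uppi p d c f g).
Local Notation vlow := (vlow p w d h c f g).
Local Notation vupp := (vupp p w d h b c f g).
Local Notation theta := (theta p w d h b c f g).
Local Notation theta_term1 := (theta_term1 p w h b c).
Local Notation theta_term2 := (theta_term2 p w d h b c f g).
Local Notation theta_term3 := (theta_term3 p w d h b c f g).

Let j0 : 'I_m := Ordinal m_gt0.

Definition obj_lbound (th : \bar R) k j : \bar R :=
  ((`|c k| / w j)%R)%:E * ((h j)%:E - th) + (c k * p k j)%:E.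

Definition obj_ubound (th : \bar R) i j : \bar R :=
  ((`|c i| / w j)%R)%:E * (th - (h j)%:E) + (c i * p i j)%:E.

(* [vupp th k] unfolds to [\big[Order.min/+oo]_i (yupp th i - bstar b i k)]. *)
Definition yupp (th : \bar R) i : \bar R :=
  \big[Order.min/+oo]_(j < m)
    Order.min (Order.min (obj_ubound th i j)
                         ((c i * p i j + `|c i| * d j)%R)%:E)
              ((Order.max (c i * f i) (c i * g i))%R)%:E.

Lemma obj_lboundE t k j :
  obj_lbound t%:E k j = (`|c k| / w j * (h j - t) + c k * p k j)%R%:E.
Proof. by rewrite /obj_lbound -EFinB -EFinM -EFinD. Qed.

Lemma obj_uboundE t i j :
  obj_ubound t%:E i j = (`|c i| / w j * (t - h j) + c i * p i j)%R%:E.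
Proof. by rewrite /obj_ubound -EFinB -EFinM -EFinD. Qed.

Lemma vlow_leP th k z : vlow th k <= z <->
  forall j, [/\ obj_lbound th k j <= z, ((c k * p k j - `|c k| * d j)%R)%:E <= z
              & ((Order.min (c k * f k) (c k * g k))%R)%:E <= z].
Proof.
split=> [/bigmax_leP[_ le_z] j|le_z].
  by move: (le_z j isT); rewrite !ge_max => /andP[/andP[-> ->] ->].
apply/bigmax_leP; split=> [|j _]; first exact: leNye.
by case: (le_z j); rewrite !ge_max => -> -> ->.
Qed.

Lemma yupp_geP th i z : z <= yupp th i <->
  forall j, [/\ z <= obj_ubound th i j, z <= ((c i * p i j + `|c i| * d j)%R)%:E
              & z <= ((Order.max (c i * f i) (c i * g i))%R)%:E].
Proof.
split=> [/bigmin_geP[_ le_z] j|le_z].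
  by move: (le_z j isT); rewrite !le_min => /andP[/andP[-> ->] ->].
apply/bigmin_geP; split=> [|j _]; first exact: leey.
by case: (le_z j); rewrite !le_min => -> -> ->.
Qed.

Lemma chebdist_leP x j e : (chebdist p x j <= e)%R <->
  forall i, (`|x i - p i j| <= e)%R.
Proof.
split=> [/bigmax_leP[_ le_e] i|le_e]; first exact: le_e.
apply/bigmax_leP; split=> //; exact: le_trans (normr_ge0 _) (le_e (Ordinal n_gt0)).
Qed.

Lemma objective_leP x t : objective x <= t%:E <->
  forall i j, (`|x i - p i j| <= (t - h j) / w j)%R.
Proof.
have obj_le j : ((w j * chebdist p x j + h j)%R%:E <= t%:E)
                = (chebdist p x j <= (t - h j) / w j)%R.
  by rewrite lee_fin ler_pdivlMr // lerBrDr mulrC.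
split=> [/bigmax_leP[_ le_t] i j|le_t].
  by move: (le_t j isT); rewrite obj_le => /chebdist_leP; apply.
apply/bigmax_leP; split=> [|j _]; first exact: leNye.
by rewrite obj_le; apply/chebdist_leP => i; apply: le_t.
Qed.

Lemma box_scaleP t i z :
  vlow t%:E i <= (c i * z)%:E <= yupp t%:E i <->
  (forall j, `|z - p i j| <= (t - h j) / w j /\ `|z - p i j| <= d j)%R
  /\ (f i <= z <= g i)%R.
Proof.
have obj j : (`|z - p i j| <= (t - h j) / w j)%R
    = (obj_lbound t%:E i j <= (c i * z)%:E <= obj_ubound t%:E i j).
  rewrite obj_lboundE obj_uboundE !lee_fin (ler_dist_scale _ _ _ (c_neq0 i)).
  have -> : (c i * p i j - `|c i| * ((t - h j) / w j)
             = `|c i| / w j * (h j - t) + c i * p i j)%R by ring.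
  have -> : (c i * p i j + `|c i| * ((t - h j) / w j)
             = `|c i| / w j * (t - h j) + c i * p i j)%R by ring.
  by [].
have dist j := ler_dist_scale z (p i j) (d j) (c_neq0 i).
have box := ler_itv_scale z (c_neq0 i) (le_fg i).
split=> [/andP[/vlow_leP lo /yupp_geP up]|[obj_d box_z]].
  split=> [j|]; last first.
    by have [_ _ lo3] := lo j0; have [_ _ up3] := up j0; rewrite box -!lee_fin lo3.
  have [lo1 lo2 _] := lo j; have [up1 up2 _] := up j.
  by rewrite obj dist lo1 up1 -!lee_fin lo2.
move: box_z; rewrite box => /andP[lo3 up3].
apply/andP; split; [apply/vlow_leP | apply/yupp_geP] => j;
  have [/[!obj]/andP[? ?] /[!dist]/andP[? ?]] := obj_d j; by split; rewrite ?lee_fin.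
Qed.

Lemma feasible_objective_le x t :
  feasible x /\ objective x <= t%:E
  <-> in_box b (vlow t%:E) (yupp t%:E) (fun i => c i * x i)%R.
Proof.
rewrite objective_leP; split=> [[[dist_d sub box] obj]|[sub box_y]].
  split=> // k; apply/box_scaleP; split=> // j.
  by split; [exact: obj | move/chebdist_leP: (dist_d j); apply].
have {}box_y k := (box_scaleP _ _ _).1 (box_y k).
split; first split=> //.
- by move=> j; apply/chebdist_leP => i; exact: ((box_y i).1 j).2.
- by move=> i; exact: (box_y i).2.
- by move=> i j; exact: ((box_y i).1 j).1.
Qed.

Lemma box_le_lowk k : ((Order.min (c k * f k) (c k * g k))%R)%:E <= lowk k.
Proof. by rewrite le_max lexx orbT. Qed.

Lemma uppi_le_box i : uppi i <= ((Order.max (c i * f i) (c i * g i))%R)%:E.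
Proof. by rewrite ge_min lexx orbT. Qed.

Lemma lowk_le_uppi k : lowk k <= uppi k.
Proof. by apply: le_trans (cond2 k k); rewrite leeDr ?bstar_ge0. Qed.

Lemma lowk_fin k : lowk k \is a fin_num.
Proof.
rewrite fin_numElt (lt_le_trans (ltNyr _) (box_le_lowk k)) /=.
exact: le_lt_trans (lowk_le_uppi k) (le_lt_trans (uppi_le_box k) (ltry _)).
Qed.

Lemma uppi_fin i : uppi i \is a fin_num.
Proof.
rewrite fin_numElt (le_lt_trans (uppi_le_box i) (ltry _)) andbT.
exact: lt_le_trans (ltNyr _) (le_trans (box_le_lowk i) (lowk_le_uppi i)).
Qed.

Lemma bstar_lt_pinfty i k : bstar b i k < +oo.
Proof.
have := cond2 i k; rewrite -(fineK (lowk_fin k)) -(fineK (uppi_fin i)).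
by case: (bstar b i k) => [r _| /=|//]; rewrite ?ltry // leNgt ltry.
Qed.

Lemma vlowE th k :
  vlow th k = Order.max (\big[Order.max/-oo]_j obj_lbound th k j) (lowk k).
Proof.
apply/le_anti/andP; split.
  apply/bigmax_leP; split=> [|j _]; first exact: leNye.
  rewrite !ge_max !le_max (le_bigmax _ (obj_lbound th k) j) /=.
  by rewrite (le_bigmax _ (fun l => ((c k * p k l - `|c k| * d l)%R)%:E) j) lexx !orbT.
rewrite ge_max /lowk ge_max ; apply/and3P; split.
- apply/bigmax_leP; split=> [|j _]; first exact: leNye.
  by apply: le_trans (le_bigmax _ _ j); rewrite !le_max lexx.
- apply/bigmax_leP; split=> [|j _]; first exact: leNye.
  by apply: le_trans (le_bigmax _ _ j); rewrite !le_max lexx !orbT.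
- by apply: le_trans (le_bigmax _ _ j0); rewrite le_max lexx orbT.
Qed.

Lemma yuppE th i :
  yupp th i = Order.min (\big[Order.min/+oo]_j obj_ubound th i j) (uppi i).
Proof.
apply/le_anti/andP; split; last first.
  apply/bigmin_geP; split=> [|j _]; first exact: leey.
  rewrite !le_min !ge_min (bigmin_le _ j (obj_ubound th i)) /=.
  by rewrite (bigmin_le _ j (fun l => ((c i * p i l + `|c i| * d l)%R)%:E)) lexx !orbT.
rewrite le_min /uppi le_min ; apply/and3P; split.
- apply/bigmin_geP; split=> [|j _]; first exact: leey.
  by apply: le_trans (bigmin_le _ j _) _; rewrite !ge_min lexx.
- apply/bigmin_geP; split=> [|j _]; first exact: leey.
  by apply: le_trans (bigmin_le _ j _) _; rewrite !ge_min lexx !orbT.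
- by apply: le_trans (bigmin_le _ j0 _) _; rewrite ge_min lexx orbT.
Qed.

Lemma theta_weights_gt0 i k j l :
  [/\ 0 < w j * w l / (`|c k| * w j + `|c i| * w l),
      0 < w j / `|c i| & 0 < w l / `|c k|]%R.
Proof. by split; rewrite divr_gt0 ?addr_gt0 ?mulr_gt0 ?normr_gt0 ?c_neq0. Qed.

Lemma theta_term1_le t i k j l : (theta_term1 i k j l <= t%:E)
  = (bstar b i k + obj_lbound t%:E k l <= obj_ubound t%:E i j).
Proof.
have [wt_gt0 _ _] := theta_weights_gt0 i k j l.
have := bstar_lt_pinfty i k; rewrite /theta_term1 obj_lboundE obj_uboundE.
case: (bstar b i k) => [B _| //|_]; last by rewrite EFin_add_mulNy ?leNye.
rewrite -!EFinB -!EFinD !lee_fin.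
by rewrite ler_mediant ?normr_gt0 ?c_neq0.
Qed.

Lemma theta_term2_le t i k j l : (theta_term2 i k j l <= t%:E)
  = (bstar b i k + lowk k <= obj_ubound t%:E i j).
Proof.
have [_ wt_gt0 _] := theta_weights_gt0 i k j l.
have := bstar_lt_pinfty i k.
rewrite /theta_term2 obj_uboundE -(fineK (lowk_fin k)).
case: (bstar b i k) => [B _| //|_]; last by rewrite EFin_add_mulNy ?leNye.
rewrite -!EFinB -!EFinD !lee_fin.
by rewrite ler_affine ?normr_gt0 ?c_neq0 // addrAC lerBlDr.
Qed.

Lemma theta_term3_le t i k j l : (theta_term3 i k j l <= t%:E)
  = (bstar b i k + obj_lbound t%:E k l <= uppi i).
Proof.
have [_ _ wt_gt0] := theta_weights_gt0 i k j l.
have := bstar_lt_pinfty i k.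
rewrite /theta_term3 obj_lboundE -(fineK (uppi_fin i)).
case: (bstar b i k) => [B _| //|_]; last by rewrite EFin_add_mulNy ?leNye.
rewrite -!EFinB -!EFinD !lee_fin.
rewrite ler_affine ?normr_gt0 ?c_neq0 //.
by apply/idP/idP => ?; lra.
Qed.

Lemma bstar_vlow_le_yupp t i k :
  bstar b i k + vlow t%:E k <= yupp t%:E i <->
  forall j l, [/\ theta_term1 i k j l <= t%:E, theta_term2 i k j l <= t%:E
                & theta_term3 i k j l <= t%:E].
Proof.
rewrite vlowE yuppE adde_maxr ge_max !(le_min _ _ (uppi i)) cond2 andbT -andbA adde_bigmaxr.
split=> [/and3P[/bigmax_leP[_ AC] /bigmax_leP[_ AU] /bigmin_geP[_ LC]] j l|terms].
  rewrite theta_term1_le theta_term2_le theta_term3_le LC ?AU //.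
  by have /bigmin_geP[_ ->] := AC l isT.
apply/and3P; split.
- apply/bigmax_leP; split=> [|l _]; first exact: leNye.
  apply/bigmin_geP; split=> [|j _]; first exact: leey.
  by case: (terms j l); rewrite theta_term1_le.
- apply/bigmax_leP; split=> [|l _]; first exact: leNye.
  by case: (terms j0 l); rewrite theta_term3_le.
- apply/bigmin_geP; split=> [|j _]; first exact: leey.
  by case: (terms j j0); rewrite theta_term2_le.
Qed.

Lemma theta_leP z : theta <= z <->
  forall i k j l, [/\ theta_term1 i k j l <= z, theta_term2 i k j l <= z
                    & theta_term3 i k j l <= z].
Proof.
split=> [le_z i k j l|terms].
  move/bigmax_leP: le_z => [_ /(_ i isT)/bigmax_leP[_ /(_ k isT)]].
  move=> /bigmax_leP[_ /(_ j isT)/bigmax_leP[_ /(_ l isT)]].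
  by rewrite !ge_max => /andP[/andP[-> ->] ->].
apply/bigmax_leP; split=> [|i _]; first exact: leNye.
apply/bigmax_leP; split=> [|k _]; first exact: leNye.
apply/bigmax_leP; split=> [|j _]; first exact: leNye.
apply/bigmax_leP; split=> [|l _]; first exact: leNye.
by case: (terms i k j l); rewrite !ge_max => -> -> ->.
Qed.

Lemma theta_le t : theta <= t%:E <->
  forall i k, bstar b i k + vlow t%:E k <= yupp t%:E i.
Proof.
rewrite theta_leP; split=> [terms i k|le_yupp i k].
  by apply/bstar_vlow_le_yupp => j l; exact: terms.
exact: (bstar_vlow_le_yupp t i k).1 (le_yupp i k).
Qed.

Lemma theta_terms_lt_pinfty i k j l :
  [/\ theta_term1 i k j l < +oo, theta_term2 i k j l < +oo
     & theta_term3 i k j l < +oo].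
Proof.
have [? ? ?] := theta_weights_gt0 i k j l; have := bstar_lt_pinfty i k.
rewrite /theta_term1 /theta_term2 /theta_term3.
rewrite -(fineK (lowk_fin k)) -(fineK (uppi_fin i)).
case: (bstar b i k) => [B _| //|_]; last by rewrite !EFin_add_mulNy.
by rewrite -!EFinB -!EFinD !ltry.
Qed.

Lemma theta_fin : theta \is a fin_num.
Proof.
have i0 : 'I_n := Ordinal n_gt0.
have [_ term2_le _] := (theta_leP theta).1 (lexx _) i0 i0 j0 j0.
rewrite fin_numElt (lt_le_trans _ term2_le) /=; last first.
  have := bstar_lt_pinfty i0 i0; have := bstar_ge0 b i0.
  rewrite /theta_term2 -(fineK (lowk_fin i0)).
  by case: (bstar b i0 i0) => [B _ _| //|//]; rewrite -!EFinB -!EFinD ltNyr.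
apply/bigmax_ltP; split=> [//|i _]; apply/bigmax_ltP; split=> [//|k _].
apply/bigmax_ltP; split=> [//|j _]; apply/bigmax_ltP; split=> [//|l _].
by case: (theta_terms_lt_pinfty i k j l); rewrite !gt_max => -> -> ->.
Qed.

Lemma objective_fin x : objective x \is a fin_num.
Proof. exact: (bigmax_fin_num j0). Qed.

Lemma theta_le_objective x : feasible x -> theta <= objective x.
Proof.
move=> feas_x; rewrite -(fineK (objective_fin x)); apply/theta_le.
apply: (in_box_bstar_le (y := fun i => c i * x i)%R).
by apply/feasible_objective_le; rewrite fineK ?objective_fin.
Qed.

Lemma vlow_fin t k : vlow t%:E k \is a fin_num.
Proof. by apply: (bigmax_fin_num j0) => j; rewrite -EFinB -EFinD -!EFin_max. Qed.

Lemma yupp_fin t i : yupp t%:E i \is a fin_num.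
Proof. by apply: (bigmin_fin_num j0) => j; rewrite obj_uboundE -!EFin_min. Qed.

Lemma yupp_gt_ninfty t i : -oo < yupp t%:E i.
Proof. by have /andP[] := yupp_fin t i; rewrite ltNye. Qed.

Lemma optimal_in_box x : feasible x /\ objective x = theta
  <-> in_box b (vlow theta) (yupp theta) (fun i => c i * x i)%R.
Proof.
rewrite -(fineK theta_fin) -feasible_objective_le fineK ?theta_fin //.
split=> [[feas_x ->]|[feas_x le_theta]] //; split=> //.
by apply/le_anti; rewrite le_theta theta_le_objective.
Qed.

Lemma optimal_exists : exists x, feasible x /\ objective x = theta.
Proof.
have [y box_y] : exists y, in_box b (vlow theta) (yupp theta) y.
  rewrite -(fineK theta_fin); apply: (in_box_exists cycle_le0).
  - exact: bstar_lt_pinfty.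
  - exact: yupp_gt_ninfty.
  - exact: vlow_fin.
  - by apply/theta_le; rewrite fineK ?theta_fin.
exists (fun i => y i / c i)%R; apply/optimal_in_box.
have cyE i : (c i * (y i / c i))%R = y i by rewrite mulrC divfK.
by case: box_y => sub_y box_y; split=> [i k|k] /=; rewrite !cyE.
Qed.

Lemma optimal_solutionsP x : feasible x /\ objective x = theta <->
  exists v, (forall k, vlow theta k <= (v k)%:E <= vupp theta k)
            /\ forall i, (x i)%:E = yvec b v i * ((c i)^-1)%:E.
Proof.
rewrite optimal_in_box -(fineK theta_fin).
rewrite (in_boxP cycle_le0 _ bstar_lt_pinfty (yupp_gt_ninfty _)).
by split=> -[v [box_v yvecE]]; exists v; split=> // i; apply/EFin_eq_mul_inv.
Qed.

End Problem.

Theorem corollary2 (R : realType) (n m : nat)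
  (p : 'I_n -> 'I_m -> R) (w d h : 'I_m -> R)
  (b : 'I_n -> 'I_n -> \bar R) (c f g : 'I_n -> R) :
  (1 <= n)%N -> (1 <= m)%N ->
  (forall j, 0 < w j)%R -> (forall j, 0 < d j)%R ->
  (forall i, c i != 0%R) -> (forall i, f i <= g i)%R ->
  (* condition 1: every cycle of length 1..n has nonpositive weight *)
  (forall (i : 'I_n) (l : 'I_n) (t : l.-tuple 'I_n), pathw b i t i <= 0) ->
  (* condition 2 *)
  (forall i k, bstar b i k + lowk p d c f g k <= uppi p d c f g i) ->
  let th := theta p w d h b c f g in
  [/\ exists x, feasible p d b c f g x /\ objective p w h x = th,
      forall x, feasible p d b c f g x -> th <= objective p w h x
    & forall x : 'I_n -> R,
        (feasible p d b c f g x /\ objective p w h x = th) <->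
        exists v : 'I_n -> R,
          (forall k, vlow p w d h c f g th k <= (v k)%:E
                     <= vupp p w d h b c f g th k)
          /\ forall i, (x i)%:E = yvec b v i * ((c i)^-1)%:E].
Proof.
move=> n_gt0 m_gt0 w_gt0 _ c_neq0 le_fg cycle_le0 cond2 th.
split.
- exact: optimal_exists.
- exact: theta_le_objective.
- exact: optimal_solutionsP.
Qed.
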